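(* Let $\mathcal O[\lambda]$ be the algebra of polynomials in an indeterminate $\lambda$ (commuting with everything in $\mathcal O$) with coefficients in $\mathcal O$, and let $J$ be the 2-sided ideal of $\mathcal O[\lambda]$ generated by $(q-q^{-1})^2\xi_1\lambda+\xi_2$, where $\xi_1=XY-YX$ and $\xi_2=X^2Y^2-Y^2X^2+(q^2+q^{-2})(YXYX-XYXY)$. Then the $\mathbb F$-algebra $\Delta$ is isomorphic to $\mathcal O[\lambda]/J$ (via the map induced by $X\mapsto A$, $Y\mapsto B$, $\lambda\mapsto\gamma$).
   Context: Let $\mathbb F$ be a field and fix a nonzero $q\in\mathbb F$ with $q^4\neq 1$; $[3]_q=q^2+1+q^{-2}$. The universal Askey--Wilson algebra $\Delta$ is the associative $\mathbb F$-algebra with 1 with generators $A,B,C$ subject to the relations that each of $A+\frac{qBC-q^{-1}CB}{q^2-q^{-2}}$, $B+\frac{qCA-q^{-1}AC}{q^2-q^{-2}}$, $C+\frac{qAB-q^{-1}BA}{q^2-q^{-2}}$ is central; $\gamma$ denotes the third of these central elements multiplied by $q+q^{-1}$. The $q$-Onsager algebra $\mathcal O$ is the $\mathbb F$-algebra with generators $X,Y$ and relations $X^3Y-[3]_q X^2YX+[3]_q XYX^2-YX^3 = -(q^2-q^{-2})^2(XY-YX)$ and $Y^3X-[3]_q Y^2XY+[3]_q YXY^2-XY^3 = -(q^2-q^{-2})^2(YX-XY)$. *)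

From HB Require Import structures.
From mathcomp Require Import all_boot all_order all_algebra.
Set Implicit Arguments. Unset Strict Implicit. Unset Printing Implicit Defensive.
Import GRing.Theory.
Local Open Scope ring_scope.

Section Defs.
Variable F : fieldType.

Definition qint3 (q : F) : F := q ^+ 2 + 1 + q ^- 2.

Definition central3 (R : algType F) (a b c z : R) : Prop :=
  GRing.comm z a /\ GRing.comm z b /\ GRing.comm z c.

Definition aw_cA (q : F) (R : algType F) (a b c : R) : R :=
  a + (q ^+ 2 - q ^- 2)^-1 *: (q *: (b * c) - q^-1 *: (c * b)).
Definition aw_cB (q : F) (R : algType F) (a b c : R) : R :=
  b + (q ^+ 2 - q ^- 2)^-1 *: (q *: (c * a) - q^-1 *: (a * c)).
Definition aw_cC (q : F) (R : algType F) (a b c : R) : R :=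
  c + (q ^+ 2 - q ^- 2)^-1 *: (q *: (a * b) - q^-1 *: (b * a)).

Definition aw_gamma (q : F) (R : algType F) (a b c : R) : R :=
  (q + q^-1) *: aw_cC q a b c.

(* Defining relations of the universal Askey--Wilson algebra Delta
   on generators A, B, C (since A, B, C generate Delta, "central" means
   commuting with A, B and C). *)
Definition aw_rel (q : F) (R : algType F) (a b c : R) : Prop :=
  [/\ central3 a b c (aw_cA q a b c),
      central3 a b c (aw_cB q a b c) &
      central3 a b c (aw_cC q a b c)].

Definition onsager_rel (q : F) (R : algType F) (x y : R) : Prop :=
  x ^+ 3 * y - qint3 q *: (x ^+ 2 * y * x) + qint3 q *: (x * y * x ^+ 2)
    - y * x ^+ 3 = - ((q ^+ 2 - q ^- 2) ^+ 2) *: (x * y - y * x) /\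
  y ^+ 3 * x - qint3 q *: (y ^+ 2 * x * y) + qint3 q *: (y * x * y ^+ 2)
    - x * y ^+ 3 = - ((q ^+ 2 - q ^- 2) ^+ 2) *: (y * x - x * y).

Definition xi1 (R : algType F) (x y : R) : R := x * y - y * x.
Definition xi2 (q : F) (R : algType F) (x y : R) : R :=
  x ^+ 2 * y ^+ 2 - y ^+ 2 * x ^+ 2
  + (q ^+ 2 + q ^- 2) *: (y * x * y * x - x * y * x * y).

(* Defining relations of O[lambda]/J on generators X, Y, lambda:
   the q-Onsager relations for X, Y; lambda commutes with X and Y
   (hence with everything in O[lambda]); and the generator of J vanishes. *)
Definition onsagerJ_rel (q : F) (R : algType F) (x y l : R) : Prop :=
  [/\ onsager_rel q x y,
      GRing.comm l x /\ GRing.comm l y &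
      (q - q^-1) ^+ 2 *: (xi1 x y * l) + xi2 q x y = 0].

Definition presented3 (P : forall R : algType F, R -> R -> R -> Prop)
    (D : algType F) (a b c : D) : Prop :=
  P D a b c /\
  forall (R : algType F) (x y z : R), P R x y z ->
    exists f : {lrmorphism D -> R},
      [/\ f a = x, f b = y, f c = z &
        forall g : {lrmorphism D -> R}, g a = x -> g b = y -> g c = z ->
          forall d, g d = f d].

End Defs.

(* Solving the third defining relation of Delta for C expresses C through A, B and
   gamma, with gamma central.  For central gamma a direct computation gives, up to the
   factor (q^2 - q^-2)^-2, that the commutator of the first central element with B is
   the q-Dolan-Grady defect of (B, A), that of the second with A is the defect of
   (A, B), and that of the first with A is (q - q^-1)^2 xi1 gamma + xi2, the generator
   of J (the second with B gives its opposite).  Hence the Askey-Wilson relations on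
   (A, B, C) are equivalent to the relations of O[lambda]/J on (A, B, gamma), and the
   universal properties of the two presentations yield mutually inverse homomorphisms.
   The commutator identities are checked by expanding into words in the noncommuting
   generators, with the central gamma moved to the front. *)

From HB Require Import structures.
From mathcomp Require Import all_boot all_order all_algebra.
From mathcomp Require Import ring.
Set Implicit Arguments. Unset Strict Implicit.
Import GRing.Theory.
Local Open Scope ring_scope.

Section NoncommutativeNormalForm.
Variables (F : fieldType) (R : algType F).

Inductive ncterm :=
| NCVar of nat | NCZero | NCOne
| NCAdd of ncterm & ncterm | NCOpp of ncterm | NCMul of ncterm & ncterm
| NCScale of F & ncterm | NCExp of ncterm & nat.

(* Polynomials in noncommuting variables, as unreduced lists of terms (coefficient, word). *)
Local Notation ncpoly := (seq (F * seq nat)).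

Variable env : nat -> R.

Fixpoint nceval t : R :=
  match t with
  | NCVar i => env i | NCZero => 0 | NCOne => 1
  | NCAdd a b => nceval a + nceval b | NCOpp a => - nceval a
  | NCMul a b => nceval a * nceval b
  | NCScale k a => k *: nceval a | NCExp a n => nceval a ^+ n
  end.

Definition word_eval (w : seq nat) : R := foldr (fun i r => env i * r) 1 w.
Definition ncpoly_eval (s : ncpoly) : R :=
  foldr (fun m r => m.1 *: word_eval m.2 + r) 0 s.

Fixpoint ncpoly_mul (s1 s2 : ncpoly) : ncpoly :=
  if s1 is m :: s then [seq (m.1 * m2.1, m.2 ++ m2.2) | m2 <- s2] ++ ncpoly_mul s s2
  else [::].

Fixpoint ncpoly_exp (s : ncpoly) n : ncpoly :=
  if n is n'.+1 then ncpoly_mul s (ncpoly_exp s n') else [:: (1, [::])].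

Fixpoint ncexpand t : ncpoly :=
  match t with
  | NCVar i => [:: (1, [:: i])] | NCZero => [::] | NCOne => [:: (1, [::])]
  | NCAdd a b => ncexpand a ++ ncexpand b
  | NCOpp a => [seq (- m.1, m.2) | m <- ncexpand a]
  | NCMul a b => ncpoly_mul (ncexpand a) (ncexpand b)
  | NCScale k a => [seq (k * m.1, m.2) | m <- ncexpand a]
  | NCExp a n => ncpoly_exp (ncexpand a) n
  end.

Lemma word_eval_cat w1 w2 : word_eval (w1 ++ w2) = word_eval w1 * word_eval w2.
Proof. by elim: w1 => [|i w IH] /=; rewrite ?mul1r // IH mulrA. Qed.

Lemma ncpoly_eval_cat s1 s2 : ncpoly_eval (s1 ++ s2) = ncpoly_eval s1 + ncpoly_eval s2.
Proof. by elim: s1 => [|m s IH] /=; rewrite ?add0r // IH addrA. Qed.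

Lemma ncpoly_evalZ k s : ncpoly_eval [seq (k * m.1, m.2) | m <- s] = k *: ncpoly_eval s.
Proof. by elim: s => [|m s IH] /=; rewrite ?scaler0 // IH scalerDr scalerA. Qed.

Lemma ncpoly_evalN s : ncpoly_eval [seq (- m.1, m.2) | m <- s] = - ncpoly_eval s.
Proof. by elim: s => [|m s IH] /=; rewrite ?oppr0 // IH opprD scaleNr. Qed.

Lemma ncpoly_eval_mul s1 s2 : ncpoly_eval (ncpoly_mul s1 s2) = ncpoly_eval s1 * ncpoly_eval s2.
Proof.
have eval_mulm m s : ncpoly_eval [seq (m.1 * m2.1, m.2 ++ m2.2) | m2 <- s]
    = (m.1 *: word_eval m.2) * ncpoly_eval s.
  elim: s => [|m2 s IH] /=; first by rewrite mulr0.
  rewrite IH mulrDr word_eval_cat; congr (_ + _).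
  by rewrite -scalerAl -scalerAr scalerA.
by elim: s1 => [|m s IH] /=; rewrite ?mul0r // ncpoly_eval_cat eval_mulm IH mulrDl.
Qed.

Lemma ncpoly_eval_exp s n : ncpoly_eval (ncpoly_exp s n) = ncpoly_eval s ^+ n.
Proof.
elim: n => [|n IH] /=; first by rewrite scale1r addr0 expr0.
by rewrite ncpoly_eval_mul IH exprS.
Qed.

Lemma ncexpandK t : ncpoly_eval (ncexpand t) = nceval t.
Proof.
elim: t => /= [i|||a Ha b Hb|a Ha|a Ha b Hb|k a Ha|a Ha n].
- by rewrite scale1r mulr1 addr0.
- by [].
- by rewrite scale1r addr0.
- by rewrite ncpoly_eval_cat Ha Hb.
- by rewrite ncpoly_evalN Ha.
- by rewrite ncpoly_eval_mul Ha Hb.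
- by rewrite ncpoly_evalZ Ha.
- by rewrite ncpoly_eval_exp Ha.
Qed.

Hypothesis env0_central : forall i, GRing.comm (env 0) (env i).

(* Words are compared with [eqn] and [word_eqb] rather than [==], so that the
   normal form computes by [lazy] without unfolding the structures of [F] and [R]. *)
Fixpoint word_eqb (w1 w2 : seq nat) : bool :=
  match w1, w2 with
  | [::], [::] => true
  | i :: w1', j :: w2' => eqn i j && word_eqb w1' w2'
  | _, _ => false
  end.

Lemma word_eqbE w1 w2 : word_eqb w1 w2 = (w1 == w2).
Proof. by elim: w1 w2 => [|i w1 IH] [|j w2] //=; rewrite IH eqseq_cons eqnE. Qed.

(* Variable 0 is central, so moving its occurrences to the front of a word is sound. *)
Definition pull0 (w : seq nat) : seq nat :=
  filter (fun i => eqn i 0) w ++ filter (fun i => ~~ eqn i 0) w.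

Lemma word_eval_pull0 w : word_eval (pull0 w) = word_eval w.
Proof.
have comm0 i v : GRing.comm (env i) (word_eval (filter (fun j => eqn j 0) v)).
  elim: v => [|[|j] v IH] //=; first exact: commr1.
  exact/commrM/IH/commr_sym.
rewrite /pull0; elim: w => [|[|i] w IH] //=; first by rewrite IH.
by rewrite word_eval_cat /= mulrA -comm0 -mulrA -word_eval_cat IH.
Qed.

Definition coef_word w (s : ncpoly) : F :=
  foldr (fun m r => if word_eqb m.2 w then m.1 + r else r) 0 s.

(* All words of [s] have total coefficient 0; [n] is fuel, at least [size s]. *)
Fixpoint coefs_eq0 n (s : ncpoly) : Prop :=
  if n is n'.+1 then
    if s is m :: _ then
      coef_word m.2 s = 0 /\ coefs_eq0 n' (filter (fun m' => ~~ word_eqb m'.2 m.2) s)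
    else True
  else True.

Lemma ncpoly_eval_split w s :
  ncpoly_eval s = coef_word w s *: word_eval w
                  + ncpoly_eval (filter (fun m => ~~ word_eqb m.2 w) s).
Proof.
elim: s => [|m s IH] /=; first by rewrite scale0r addr0.
rewrite word_eqbE; case: eqP => [->|_] /=; first by rewrite IH scalerDl addrA.
by rewrite IH addrCA.
Qed.

Lemma ncpoly_eval_eq0 n s : (size s <= n)%N -> coefs_eq0 n s -> ncpoly_eval s = 0.
Proof.
elim: n s => [|n IH] [|m s] // Hs [Hm Hrest].
rewrite (ncpoly_eval_split m.2) Hm scale0r add0r /= word_eqbE eqxx /= IH //.
  by rewrite size_filter (leq_trans (count_size _ _)).
by move: Hrest; rewrite /= word_eqbE eqxx.
Qed.

Definition ncnormal t : ncpoly := [seq (m.1, pull0 m.2) | m <- ncexpand t].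

Lemma nceval_eq t1 t2 :
  let s := ncnormal (NCAdd t1 (NCOpp t2)) in
  coefs_eq0 (size s) s -> nceval t1 = nceval t2.
Proof.
move=> s /(ncpoly_eval_eq0 (leqnn _)) /eqP.
have -> : ncpoly_eval s = ncpoly_eval (ncexpand (NCAdd t1 (NCOpp t2))).
  by rewrite /s /ncnormal; elim: ncexpand => [|m s' IH] //=; rewrite IH word_eval_pull0.
by rewrite ncexpandK subr_eq0 => /eqP.
Qed.

End NoncommutativeNormalForm.

Lemma central_env (F : fieldType) (R : algType F) (c : R) (vs : seq R) :
  (forall v, v \in vs -> GRing.comm c v) ->
  forall i, GRing.comm (nth 0 (c :: vs) 0) (nth 0 (c :: vs) i).
Proof.
move=> cvs [|i] //=; have [/(mem_nth 0)/cvs //|/(nth_default 0)->] := ltnP i (size vs).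
exact: commr0.
Qed.

Ltac nc_index t vs :=
  lazymatch vs with
  | ?a :: ?vs' =>
      lazymatch constr:((t, a)) with
      | (?u, ?u) => constr:(0%N)
      | _ => let i := nc_index t vs' in constr:(i.+1)
      end
  end.

Ltac nc_reify F vs t :=
  lazymatch t with
  | @GRing.add _ ?a ?b =>
      let ra := nc_reify F vs a in let rb := nc_reify F vs b in constr:(@NCAdd F ra rb)
  | @GRing.opp _ ?a => let ra := nc_reify F vs a in constr:(@NCOpp F ra)
  | @GRing.mul _ ?a ?b =>
      let ra := nc_reify F vs a in let rb := nc_reify F vs b in constr:(@NCMul F ra rb)
  | @GRing.scale _ _ ?k ?a => let ra := nc_reify F vs a in constr:(@NCScale F k ra)
  | @GRing.exp _ ?a ?n => let ra := nc_reify F vs a in constr:(@NCExp F ra n)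
  | @GRing.zero _ => constr:(@NCZero F)
  | @GRing.one _ => constr:(@NCOne F)
  | _ => let i := nc_index t vs in constr:(@NCVar F i)
  end.

(* Reduces an identity over the atoms [c :: vs], where [cvs] states that [c] commutes
   with [vs], to the vanishing of the coefficient of each normal word, a goal in [F]. *)
Ltac nc_ring F c vs cvs :=
  lazymatch goal with |- ?l = ?r =>
    let atoms := constr:(c :: vs) in
    let tl := nc_reify F atoms l in let tr := nc_reify F atoms r in
    change (nceval (nth 0 atoms) tl = nceval (nth 0 atoms) tr);
    apply: (nceval_eq (central_env cvs));
    lazy beta iota zeta delta [coefs_eq0 ncnormal ncexpand ncpoly_mul ncpoly_exp
      pull0 coef_word word_eqb eqn map filter cat foldr size negb andb fst snd]
  end.

Lemma presented3_lrmorph_id (F : fieldType) (P : forall R : algType F, R -> R -> R -> Prop)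
    (D : algType F) (a b c : D) :
  presented3 P a b c ->
  forall g : {lrmorphism D -> D}, g a = a -> g b = b -> g c = c -> g =1 id.
Proof.
move=> [Pabc presD] g ga gb gc d.
have [f [_ _ _ fU]] := presD D a b c Pabc.
by rewrite (fU g ga gb gc d) -(fU idfun).
Qed.

Section AskeyWilsonOnsager.
Variables (F : fieldType) (q : F).
Hypotheses (q_neq0 : q != 0) (q4_neq1 : q ^+ 4 != 1).

Local Notation e := (q ^+ 2 - q ^- 2).
Local Notation k := (q + q^-1).

Lemma q4B1_neq0 : (q * q) ^+ 2 - 1 != 0.
Proof. by rewrite -expr2 -exprM subr_eq0. Qed.

Lemma q2D1_neq0 : q * q + 1 != 0.
Proof.
apply: contraNneq q4B1_neq0 => q2D1_eq0.
have -> : (q * q) ^+ 2 - 1 = (q * q - 1) * (q * q + 1) by ring.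
by rewrite q2D1_eq0 mulr0.
Qed.

Lemma e_neq0 : e != 0.
Proof.
have -> : e = ((q * q) ^+ 2 - 1) / (q * q) by field.
by rewrite mulf_neq0 ?invr_eq0 ?mulf_neq0 ?q4B1_neq0.
Qed.

Lemma k_neq0 : k != 0.
Proof.
have -> : k = (q * q + 1) / q by field.
by rewrite mulf_neq0 ?invr_eq0 ?q2D1_neq0.
Qed.

(* [field] states its nonzero side conditions in these forms. *)
Ltac coef_field := repeat split; field; by rewrite ?q_neq0 ?q2D1_neq0 ?q4B1_neq0.

Section Algebra.
Variable R : algType F.

Lemma commrE (a b : R) : GRing.comm a b <-> b * a - a * b = 0.
Proof. by rewrite /GRing.comm; split=> [->|/eqP]; rewrite ?subrr // subr_eq0 => /eqP ->. Qed.

Lemma commrZ (t : F) (a b : R) : GRing.comm a b -> GRing.comm a (t *: b).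
Proof. by rewrite /GRing.comm -scalerAr -scalerAl => ->. Qed.

Lemma commZlP (t : F) (a b : R) : t != 0 -> GRing.comm (t *: a) b <-> GRing.comm a b.
Proof.
move=> t_neq0; split=> [|ab]; last exact/commr_sym/commrZ/commr_sym.
by move/commr_sym/(commrZ t^-1)/commr_sym; rewrite scalerA mulVf // scale1r.
Qed.

Lemma scale_inv_e2_eq0 (v : R) : (e ^+ 2)^-1 *: v = 0 <-> v = 0.
Proof.
split=> [/eqP|->]; last exact: scaler0.
by rewrite scaler_eq0 invr_eq0 expf_eq0 (negbTE e_neq0) andbF => /eqP.
Qed.

Ltac comm_build := repeat first [assumption | apply: commr_refl | apply: commrD
  | apply: commrN | apply: commrM | apply: commrZ].

Definition aw_C_of_gamma (x y l : R) : R :=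
  k^-1 *: l - e^-1 *: (q *: (x * y) - q^-1 *: (y * x)).

Lemma aw_cC_C_of_gamma x y l : aw_cC q x y (aw_C_of_gamma x y l) = k^-1 *: l.
Proof. by rewrite /aw_cC /aw_C_of_gamma subrK. Qed.

Lemma aw_C_of_gammaK x y : cancel (aw_C_of_gamma x y) (aw_gamma q x y).
Proof. by move=> l; rewrite /aw_gamma aw_cC_C_of_gamma scalerA mulfV ?k_neq0 // scale1r. Qed.

Lemma aw_gammaK x y : cancel (aw_gamma q x y) (aw_C_of_gamma x y).
Proof. by move=> c; rewrite /aw_C_of_gamma /aw_gamma scalerA mulVf ?k_neq0 // scale1r /aw_cC addrK. Qed.

Definition dg_defect (x y : R) : R :=
  x ^+ 3 * y - qint3 q *: (x ^+ 2 * y * x) + qint3 q *: (x * y * x ^+ 2) - y * x ^+ 3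
  + e ^+ 2 *: (x * y - y * x).

Lemma onsager_relE x y : onsager_rel q x y <-> dg_defect x y = 0 /\ dg_defect y x = 0.
Proof.
rewrite /onsager_rel /dg_defect !scaleNr.
by split=> [[-> ->]|[/eqP h1 /eqP h2]]; split; rewrite ?addNr //; apply/eqP; rewrite -addr_eq0.
Qed.

Definition onsagerJ_gen (x y l : R) : R := (q - q^-1) ^+ 2 *: (xi1 x y * l) + xi2 q x y.

Section CentralGamma.
Variables x y l : R.
Hypotheses (lx : GRing.comm l x) (ly : GRing.comm l y).
Local Notation c := (aw_C_of_gamma x y l).

Let lxy v : v \in [:: x; y] -> GRing.comm l v.
Proof. by rewrite !inE => /orP[]/eqP->. Qed.

Lemma aw_cA_comm_y : GRing.comm (aw_cA q x y c) y <-> dg_defect y x = 0.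
Proof.
rewrite commrE; suff -> : y * aw_cA q x y c - aw_cA q x y c * y = (e ^+ 2)^-1 *: dg_defect y x.
  exact: scale_inv_e2_eq0.
rewrite /aw_C_of_gamma /aw_cA /dg_defect /qint3.
nc_ring F l [:: x; y] lxy; coef_field.
Qed.

Lemma aw_cB_comm_x : GRing.comm (aw_cB q x y c) x <-> dg_defect x y = 0.
Proof.
rewrite commrE; suff -> : x * aw_cB q x y c - aw_cB q x y c * x = (e ^+ 2)^-1 *: dg_defect x y.
  exact: scale_inv_e2_eq0.
rewrite /aw_C_of_gamma /aw_cB /dg_defect /qint3.
nc_ring F l [:: x; y] lxy; coef_field.
Qed.

Lemma aw_cA_comm_x : GRing.comm (aw_cA q x y c) x <-> onsagerJ_gen x y l = 0.
Proof.
rewrite commrE; suff -> : x * aw_cA q x y c - aw_cA q x y c * x = (e ^+ 2)^-1 *: onsagerJ_gen x y l.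
  exact: scale_inv_e2_eq0.
rewrite /aw_C_of_gamma /aw_cA /onsagerJ_gen /xi1 /xi2.
nc_ring F l [:: x; y] lxy; coef_field.
Qed.

Lemma aw_cB_comm_y : GRing.comm (aw_cB q x y c) y <-> onsagerJ_gen x y l = 0.
Proof.
rewrite commrE.
suff -> : y * aw_cB q x y c - aw_cB q x y c * y = - ((e ^+ 2)^-1 *: onsagerJ_gen x y l).
  split=> [/eqP|/scale_inv_e2_eq0 ->]; last exact: oppr0.
  by rewrite oppr_eq0 => /eqP/scale_inv_e2_eq0.
rewrite /aw_C_of_gamma /aw_cB /onsagerJ_gen /xi1 /xi2.
nc_ring F l [:: x; y] lxy; coef_field.
Qed.

Lemma gamma_comm_aw_cA : GRing.comm l (aw_cA q x y c).
Proof. by rewrite /aw_cA /aw_C_of_gamma; comm_build. Qed.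

Lemma gamma_comm_aw_cB : GRing.comm l (aw_cB q x y c).
Proof. by rewrite /aw_cB /aw_C_of_gamma; comm_build. Qed.

Lemma central3_C_of_gamma w :
  GRing.comm w x -> GRing.comm w y -> GRing.comm w l -> central3 x y c w.
Proof. by move=> wx wy wl; do 2!split => //; rewrite /aw_C_of_gamma; comm_build. Qed.

End CentralGamma.

Lemma aw_rel_C_of_gamma x y l : aw_rel q x y (aw_C_of_gamma x y l) <-> onsagerJ_rel q x y l.
Proof.
have cC_comm v : GRing.comm (aw_cC q x y (aw_C_of_gamma x y l)) v <-> GRing.comm l v.
  by rewrite aw_cC_C_of_gamma; apply: commZlP; rewrite invr_eq0 k_neq0.
split=> [[[aCx [aCy _]] [bCx _] [/cC_comm lx [/cC_comm ly _]]]|].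
  split; last exact/(aw_cA_comm_x lx ly).
  - by apply/onsager_relE; split; [apply/(aw_cB_comm_x lx ly)|apply/(aw_cA_comm_y lx ly)].
  - by [].
move=> [/onsager_relE[dxy dyx] [lx ly] J].
split; apply: central3_C_of_gamma.
- exact/(aw_cA_comm_x lx ly).
- exact/(aw_cA_comm_y lx ly).
- exact/commr_sym/(gamma_comm_aw_cA lx ly).
- exact/(aw_cB_comm_x lx ly).
- exact/(aw_cB_comm_y lx ly).
- exact/commr_sym/(gamma_comm_aw_cB lx ly).
- exact/cC_comm.
- exact/cC_comm.
- exact/cC_comm/commr_refl.
Qed.

End Algebra.

Section Morphism.
Variables (R S : algType F) (f : {lrmorphism R -> S}).

Let fB u v : f (u - v) = f u - f v. Proof. exact: raddfB. Qed.
Let fD u v : f (u + v) = f u + f v. Proof. exact: raddfD. Qed.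
Let fZ (t : F) u : f (t *: u) = t *: f u. Proof. exact: linearZZ. Qed.

Lemma lrmorph_aw_C_of_gamma x y l : f (aw_C_of_gamma x y l) = aw_C_of_gamma (f x) (f y) (f l).
Proof. by rewrite /aw_C_of_gamma !(fB, fZ, rmorphM). Qed.

Lemma lrmorph_aw_gamma x y c : f (aw_gamma q x y c) = aw_gamma q (f x) (f y) (f c).
Proof. by rewrite /aw_gamma /aw_cC !(fB, fD, fZ, rmorphM). Qed.

End Morphism.
End AskeyWilsonOnsager.

Theorem theorem10p3 (F : fieldType) (q : F) :
  q != 0 -> q ^+ 4 != 1 ->
  forall (Delta : algType F) (A B C : Delta),
    presented3 (aw_rel q) A B C ->
  forall (OJ : algType F) (X Y L : OJ),
    presented3 (onsagerJ_rel q) X Y L ->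
  exists f : {lrmorphism OJ -> Delta},
    [/\ f X = A, f Y = B, f L = aw_gamma q A B C & bijective f].
Proof.
move=> q_neq0 q4_neq1 Delta A B C presD OJ X Y L presO.
have relO : onsagerJ_rel q A B (aw_gamma q A B C).
  by apply/(aw_rel_C_of_gamma q_neq0 q4_neq1); rewrite aw_gammaK //; case: presD.
have relD : aw_rel q X Y (aw_C_of_gamma q X Y L).
  by apply/(aw_rel_C_of_gamma q_neq0 q4_neq1); case: presO.
have [f [fX fY fL _]] := presO.2 Delta A B _ relO.
have [g [gA gB gC _]] := presD.2 OJ X Y _ relD.
have gfK : (g \o f : {lrmorphism OJ -> OJ}) =1 id.
  apply: (presented3_lrmorph_id presO) => /=.
  - by rewrite fX gA.
  - by rewrite fY gB.
  - by rewrite fL lrmorph_aw_gamma gA gB gC aw_C_of_gammaK.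
have fgK : (f \o g : {lrmorphism Delta -> Delta}) =1 id.
  apply: (presented3_lrmorph_id presD) => /=.
  - by rewrite gA fX.
  - by rewrite gB fY.
  - by rewrite gC lrmorph_aw_C_of_gamma fX fY fL aw_gammaK.
by exists f; split => //; exists g.
Qed.
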